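(* The polynomials $f^*(n,q)$ satisfy: (a) for each $n\ge2$, $f^*(n,q)$ has degree $2n-4$ in $q$ and leading coefficient $1$; (b) for any integers $3\le n<n'$, we have $f^*(n,q)<_{\mathrm{lex}}f^*(n',q)$, and the first position at which the coefficient sequences of $f^*(n,q)$ and $f^*(n',q)$ differ is the $n$-th entry (the term of $n$-th highest order), where the two entries differ by exactly $1$.
   Context: For a polynomial $\phi$ defined on $\{-1,\dots,n-1\}$ (as a function of the integer argument) with $\phi(-1)=0$, $n\ge1$ and $-1\le k\le\frac{n-1}{2}$, let $u(\phi,n,q,k)=q^{2k+2}\phi(n-k-1)+\phi(k)+\bigl(\sum_{i=0}^kq^i\bigr)\bigl(\sum_{j=k}^{n-2}q^j\bigr)$. For $n\ge1$ let $k^*(n)=n-2^{\lfloor\log_2 n\rfloor}$ (the unique $0\le k\le\frac{n-1}{2}$ with $n-k$ a power of two). Define polynomials in $q$: $f^*(-1,q)=f^*(0,q)=f^*(1,q)=0$, $f^*(2,q)=1$, $f^*(3,q)=q^2+1$, $f^*(4,q)=q^4+2q^2+q+1$, and recursively $f^*(n,q)=u(f^*(\cdot,q),n,q,k^*(n))$ for $n\ge5$. The coefficient sequence of a nonzero polynomial lists its coefficients starting with the leading coefficient in order of decreasing power, followed by infinitely many zeros. For polynomials $g,h$ with coefficient sequences $(a_i)$, $(b_i)$, $g<_{\mathrm{lex}}h$ means there is $i\ge1$ with $a_i<b_i$ and $a_j=b_j$ for all $j<i$. *)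

From mathcomp Require Import all_boot all_order all_algebra.
Set Implicit Arguments. Unset Strict Implicit. Unset Printing Implicit Defensive.
Import Order.TTheory GRing.Theory Num.Theory.
Local Open Scope ring_scope.

(* A function phi on {-1,...,n-1} with phi(-1)=0 is represented by a
   sequence s with phi(m) = nth 0 s m for m >= 0 (the value at -1 is never
   used since k*(n) >= 0). *)

Definition u_op (s : seq {poly int}) (n k : nat) : {poly int} :=
  'X^(2 * k + 2) * nth 0 s (n - k - 1) + nth 0 s k
  + (\sum_(0 <= i < k.+1) 'X^i) * (\sum_(k <= j < n.-1) 'X^j).

Definition kstar (n : nat) : nat := (n - 2 ^ trunc_log 2 n)%N.

(* value f*(n) computed from the table s = [f*(0); ...; f*(n-1)] *)
Definition fstar_next (s : seq {poly int}) (n : nat) : {poly int} :=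
  match n with
  | 0 | 1 => 0
  | 2 => 1
  | 3 => 'X^2 + 1
  | 4 => 'X^4 + 2%:R * 'X^2 + 'X + 1
  | _ => u_op s n (kstar n)
  end.

Fixpoint fstar_tab (m : nat) : seq {poly int} :=
  match m with
  | 0 => [:: 0]
  | m'.+1 => rcons (fstar_tab m') (fstar_next (fstar_tab m') m)
  end.

Definition fstar (n : nat) : {poly int} := nth 0 (fstar_tab n) n.

(* coefficient sequence, 1-indexed: entry i (i >= 1) is the coefficient of
   q^(deg p + 1 - i), i.e. leading coefficient first, then zeros *)
Definition coefseq (p : {poly int}) (i : nat) : int :=
  if (1 <= i <= size p)%N then p`_(size p - i) else 0.

Definition lex_lt (p r : {poly int}) : Prop :=
  exists i : nat, (1 <= i)%N /\ coefseq p i < coefseq r i /\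
    forall j : nat, (1 <= j < i)%N -> coefseq p j = coefseq r j.

From mathcomp Require Import all_boot all_order all_algebra.
From mathcomp Require Import zify ring.
Import Order.TTheory GRing.Theory Num.Theory.
Local Open Scope ring_scope.

(* The dominant term of the recursion is q^(2k+2) f*(n-k-1): since 2k < n it
   is monic of degree 2n-4 by induction, while f*(k) and the product of the
   two geometric sums have smaller degree.  For (b), f*(n+1) - q^2 f*(n) has
   no coefficient in degree >= n-1 except a 1 in degree n-1.  If n+1 is a
   power of two this difference is 1 + q + ... + q^(n-1); otherwise
   k*(n+1) = k*(n) + 1, the terms q^(2k+4) f*(n-k-1) cancel, and what is left
   is f*(k+1) - q^2 f*(k) + q^(k+1) + ... + q^(n-1), whose first two terms
   have degree < n-1.  Hence the first n entries of the coefficient sequence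
   of f*(n+1) are those of f*(n) with the n-th increased by 1, and the
   entries up to position n stay fixed as n' grows further. *)

Lemma size_fstar_tab m : size (fstar_tab m) = m.+1.
Proof. by elim: m => //= m IHm; rewrite size_rcons IHm. Qed.

Lemma nth_fstar_tab m j : (j <= m)%N -> nth 0 (fstar_tab m) j = fstar j.
Proof.
elim: m => [|m IHm]; first by rewrite leqn0 => /eqP ->.
rewrite leq_eqVlt => /orP[/eqP -> // | ltjm].
by rewrite /= nth_rcons size_fstar_tab ltjm IHm.
Qed.

Lemma fstarS n : fstar n.+1 = fstar_next (fstar_tab n) n.+1.
Proof. by rewrite /fstar /= nth_rcons size_fstar_tab ltnn eqxx. Qed.

Lemma fstar0 : fstar 0 = 0. Proof. by []. Qed.

Lemma fstar1 : fstar 1 = 0. Proof. by rewrite fstarS. Qed.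

Lemma kstar_lt_half n : (0 < n)%N -> (2 * kstar n < n)%N.
Proof.
move=> n_gt0; have /andP[lo hi] := trunc_log_bounds (isT : (1 < 2)%N) n_gt0.
by rewrite /kstar; rewrite expnS in hi; lia.
Qed.

Lemma kstarS n : kstar n.+1 = 0%N \/ kstar n.+1 = (kstar n).+1.
Proof.
have /andP[lo hi] := trunc_log_bounds (isT : (1 < 2)%N) (ltn0Sn n).
rewrite /kstar; set t := trunc_log 2 n.+1 in lo hi *.
have [eq_n | lt_n] := eqVneq (2 ^ t)%N n.+1; first by left; rewrite eq_n subnn.
have -> : trunc_log 2 n = t by apply: trunc_log_eq => //; lia.
by right; lia.
Qed.

Section SumX.

Context {R : nzSemiRingType}.

Definition sumX (a b : nat) : {poly R} := \sum_(a <= j < b) 'X^j.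

Lemma coef_sumX a b j : (sumX a b)`_j = (a <= j < b)%N%:R.
Proof.
rewrite /sumX; elim: b => [|b IHb]; first by rewrite big_geq // coef0 ltn0 andbF.
have [le_ab | lt_ba] := leqP a b; last first.
  by rewrite big_geq // coef0; have -> : (a <= j < b.+1)%N = false by lia.
rewrite big_nat_recr //= coefD IHb coefXn.
have -> : (a <= j < b.+1)%N = (a <= j < b)%N || (j == b) by lia.
by case: eqVneq => [-> | _]; rewrite ?ltnn ?andbF ?add0r ?orbF ?addr0.
Qed.

Lemma size_sumX a b : (size (sumX a b) <= b)%N.
Proof.
by apply/leq_sizeP => j le_bj; rewrite coef_sumX; have -> : (a <= j < b)%N = false by lia.
Qed.

Lemma sumXSS a b : sumX a.+1 b.+1 = 'X * sumX a b.
Proof. by rewrite /sumX big_add1 mulr_sumr; apply: eq_bigr => i _; rewrite exprS. Qed.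

Lemma sumX0S b : sumX 0 b.+1 = 1 + 'X * sumX 0 b.
Proof. by rewrite -sumXSS /sumX big_nat_recl // big_add1 expr0. Qed.

End SumX.

Lemma fstar_rec n : (4 <= n)%N ->
  fstar n = 'X^(2 * kstar n + 2) * fstar (n - kstar n - 1) + fstar (kstar n)
            + sumX 0 (kstar n).+1 * sumX (kstar n) n.-1.
Proof.
case: n => // n le4n; rewrite fstarS.
have [n_eq3 | n_gt3] := eqVneq n 3%N.
  (* f*(4) is given explicitly, but it also obeys the recursion (k*(4) = 0). *)
  have k4 : kstar 4 = 0%N by [].
  rewrite n_eq3 k4 /= /sumX /fstar /= !big_nat_recr //= big_nil expr0; ring.
have -> : fstar_next (fstar_tab n) n.+1 = u_op (fstar_tab n) n.+1 (kstar n.+1).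
  by case: n le4n n_gt3 => [|[|[|[|n]]]].
have k_lt := kstar_lt_half n.+1 isT.
by rewrite /u_op !nth_fstar_tab //; lia.
Qed.

Lemma fstar_monic_size n : (2 <= n)%N ->
  fstar n \is monic /\ size (fstar n) = (2 * n - 3)%N.
Proof.
elim/ltn_ind: n => n IHn le2n.
have size_le m : (m < n)%N -> (size (fstar m) <= 2 * m - 3)%N.
  case: m => [|[|m]] lt_mn; try by rewrite (fstar0, fstar1) size_poly0.
  by have [_ ->] := IHn m.+2 lt_mn isT.
case: n IHn le2n size_le => [|[|[|[|n]]]] // IHn _ size_le.
- by rewrite fstarS /= monic1 size_poly1.
- by rewrite fstarS /= -polyC1 monicXnaddC // size_XnaddC.
rewrite fstar_rec // -addrA; set N := n.+4; set k := kstar N.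
have k_lt := kstar_lt_half N isT.
have [G_monic G_size] := IHn (N - k - 1)%N ltac:(lia) ltac:(lia).
have lead_size : size ('X^(2 * k + 2) * fstar (N - k - 1)) = (2 * N - 3)%N.
  by rewrite size_monicM ?monicXn ?monic_neq0 // size_polyXn G_size; lia.
have rest_size : (size (fstar k + sumX 0 k.+1 * sumX k N.-1)%R < 2 * N - 3)%N.
  apply: (leq_ltn_trans (size_polyD _ _)); rewrite gtn_max.
  have := size_le k ltac:(lia).
  have := size_polyMleq (sumX 0 k.+1 : {poly int}) (sumX k N.-1).
  have := size_sumX (R := int) 0 k.+1; have := size_sumX (R := int) k N.-1.
  lia.
split; last by rewrite size_polyDl lead_size.
by rewrite monicE lead_coefDl ?lead_size // lead_coef_monicM ?monicXn.
Qed.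

Lemma coef_fstar_ge n i : (2 * n - 3 <= i)%N -> (fstar n)`_i = 0.
Proof.
move=> le_i; apply: nth_default; apply: leq_trans le_i.
case: n => [|[|n]]; try by rewrite (fstar0, fstar1) size_poly0.
by have [_ ->] := fstar_monic_size n.+2 isT.
Qed.

Lemma fstarS_subX2_pow2 n : (3 <= n)%N -> kstar n.+1 = 0%N ->
  fstar n.+1 - 'X^2 * fstar n = sumX 0 n.
Proof.
move=> le3n k0; rewrite fstar_rec // k0 subn0 subn1 /= fstar0 addr0.
by rewrite /sumX big_nat1 expr0 mul1r addrAC subrr add0r.
Qed.

Lemma fstarS_subX2 n : (4 <= n)%N -> kstar n.+1 = (kstar n).+1 ->
  fstar n.+1 - 'X^2 * fstar n
  = fstar (kstar n).+1 - 'X^2 * fstar (kstar n) + sumX (kstar n).+1 n.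
Proof.
move=> le4n kS; rewrite (fstar_rec n.+1 (leqW le4n)) (fstar_rec n le4n) kS /=.
have := kstar_lt_half n ltac:(lia); set k := kstar n => k_lt.
have -> : (n.+1 - k.+1 - 1 = n - k - 1)%N by lia.
have -> : (2 * k.+1 + 2 = 2 + (2 * k + 2))%N by lia.
have -> : sumX k.+1 n = 'X * sumX k n.-1 :> {poly int} by rewrite -sumXSS prednK //; lia.
rewrite sumX0S exprD expr2; ring.
Qed.

Lemma coef_fstarS_subX2 n j : (3 <= n)%N -> (n.-1 <= j)%N ->
  (fstar n.+1 - 'X^2 * fstar n)`_j = (j == n.-1)%:R.
Proof.
move=> le3n le_j; have [k0 | kS] := kstarS n.
  by rewrite fstarS_subX2_pow2 // coef_sumX; congr (_%:R); lia.
have le4n : (4 <= n)%N.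
  (* for n = 3 the hypothesis kS reads k*(4) = k*(3) + 1, i.e. 0 = 2 *)
  by move: le3n kS; rewrite leq_eqVlt => /orP[/eqP <- | ].
have k_lt := kstar_lt_half n ltac:(lia).
rewrite fstarS_subX2 // !coefD coefN coefXnM coef_sumX ifN; last by lia.
by rewrite !coef_fstar_ge ?subrr ?add0r; [congr (_%:R) | ..]; lia.
Qed.

Lemma coefseq_fstar n i : (2 <= n)%N -> (1 <= i <= 2 * n - 3)%N ->
  coefseq (fstar n) i = (fstar n)`_(2 * n - 3 - i).
Proof.
move=> le2n le_i; have [_ size_n] := fstar_monic_size n le2n.
by rewrite /coefseq size_n le_i.
Qed.

Lemma coefseq_fstarS n i : (3 <= n)%N -> (1 <= i <= n)%N ->
  coefseq (fstar n.+1) i = coefseq (fstar n) i + (i == n)%:R.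
Proof.
move=> le3n le_i; rewrite !coefseq_fstar //; try lia.
have := coef_fstarS_subX2 n (2 * n.+1 - 3 - i) le3n ltac:(lia).
rewrite coefB coefXnM ifN; last by lia.
have -> : (2 * n.+1 - 3 - i - 2 = 2 * n - 3 - i)%N by lia.
have -> : (2 * n.+1 - 3 - i == n.-1)%N = (i == n) by apply/eqP/eqP; lia.
by move/eqP; rewrite subr_eq addrC => /eqP.
Qed.

Lemma coefseq_fstar_lt n n' i : (3 <= n)%N -> (n < n')%N -> (1 <= i <= n)%N ->
  coefseq (fstar n') i = coefseq (fstar n) i + (i == n)%:R.
Proof.
move=> le3n; elim: n' => // n' IHn'.
rewrite ltnS leq_eqVlt => /orP[/eqP <- | lt_nn'] le_i.
  exact: coefseq_fstarS.
by rewrite coefseq_fstarS ?IHn' //; [rewrite (_ : (i == n') = false) ?addr0 | ..]; lia.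
Qed.

Theorem lemma3p40 :
  (forall n : nat, (2 <= n)%N ->
     (size (fstar n)).-1 = (2 * n - 4)%N /\ lead_coef (fstar n) = 1)
  /\
  (forall n n' : nat, (3 <= n)%N -> (n < n')%N ->
     lex_lt (fstar n) (fstar n')
     /\ (forall j : nat, (1 <= j < n)%N -> coefseq (fstar n) j = coefseq (fstar n') j)
     /\ coefseq (fstar n) n != coefseq (fstar n') n
     /\ `|coefseq (fstar n') n - coefseq (fstar n) n| = 1).
Proof.
split=> [n le2n | n n' le3n lt_nn'].
  have [/monicP lead1 size_n] := fstar_monic_size n le2n.
  by rewrite size_n lead1; split; first lia.
have coef_n : coefseq (fstar n') n = coefseq (fstar n) n + 1.
  by rewrite (coefseq_fstar_lt _ _ _ le3n lt_nn') ?eqxx // leqnn andbT (ltn_trans _ le3n).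
have coef_lt j : (1 <= j < n)%N -> coefseq (fstar n) j = coefseq (fstar n') j.
  move=> /andP[le1j lt_jn].
  by rewrite (coefseq_fstar_lt _ _ _ le3n lt_nn') ?(ltn_eqF lt_jn) ?addr0 // le1j ltnW.
split; [|split; [exact: coef_lt | split]].
- by exists n; split; [lia | rewrite coef_n ltrDl].
- by rewrite coef_n eq_sym -subr_eq0 addrC addKr.
- by rewrite coef_n addrC addKr.
Qed.
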